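(* Let $f_1,h_1$ be arbitrary smooth functions of one variable and $f_0,h_0$ arbitrary constants. For the equation $m_t+f(u,u_x)m+(g(u,u_x)m)_x=0$, $m=u-u_{xx}$, with $$f(u,u_x)=u_xf_1(u^2-u_x^2)+\frac{f_0u}{u^2-u_x^2},\qquad g(u,u_x)=uf_1(u^2-u_x^2)+h_1(u^2-u_x^2)+\frac{f_0u^2+h_0u}{u_x(u^2-u_x^2)},$$ both a local conservation law for momentum, $D_t u+D_x\Phi_1=0$, and a local conservation law for the $H^1$ density, $D_t(u_x^2+u^2)+D_x\Phi_2=0$, hold on all locally smooth solutions (for suitable fluxes $\Phi_1,\Phi_2$ depending on $x,u,u_x,m,u_t,u_{tx}$).
   Context: $D_t$, $D_x$ denote total derivatives; a local conservation law holds on solutions, i.e. after eliminating $m_t$ via $m_t=-f(u,u_x)m-(g(u,u_x)m)_x$. The expressions are considered on open sets where they are defined. *)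

From Stdlib Require Import Reals List.
From Coquelicot Require Import Coquelicot.
Open Scope R_scope.

(* Functions of (t, x) are curried: u t x. *)

Definition pt (u : R -> R -> R) : R -> R -> R :=
  fun t x => Derive (fun s => u s x) t.
Definition px (u : R -> R -> R) : R -> R -> R :=
  fun t x => Derive (fun y => u t y) x.

Fixpoint pder (w : list bool) (u : R -> R -> R) : R -> R -> R :=
  match w with
  | nil => u
  | cons b w' => if b then pt (pder w' u) else px (pder w' u)
  end.

Definition smooth_on (U : R * R -> Prop) (u : R -> R -> R) : Prop :=
  forall (w : list bool) (p : R * R), U p ->
    ex_derive (fun s => pder w u s (snd p)) (fst p) /\
    ex_derive (fun y => pder w u (fst p) y) (snd p) /\
    continuous (fun q : R * R => pder w u (fst q) (snd q)) p.

Definition smooth1 (f : R -> R) : Prop :=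
  forall (n : nat) (x : R), ex_derive (Derive_n f n) x.

Definition mom (u : R -> R -> R) : R -> R -> R :=
  fun t x => u t x - px (px u) t x.

(* f(u, u_x) and g(u, u_x) with a = u, b = u_x *)
Definition fcoef (f1 : R -> R) (f0 : R) (a b : R) : R :=
  b * f1 (a ^ 2 - b ^ 2) + f0 * a / (a ^ 2 - b ^ 2).

Definition gcoef (f1 h1 : R -> R) (f0 h0 : R) (a b : R) : R :=
  a * f1 (a ^ 2 - b ^ 2) + h1 (a ^ 2 - b ^ 2)
  + (f0 * a ^ 2 + h0 * a) / (b * (a ^ 2 - b ^ 2)).

Definition solves_on (f1 h1 : R -> R) (f0 h0 : R)
    (U : R * R -> Prop) (u : R -> R -> R) : Prop :=
  forall p : R * R, U p ->
    pt (mom u) (fst p) (snd p)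
    + fcoef f1 f0 (u (fst p) (snd p)) (px u (fst p) (snd p)) * mom u (fst p) (snd p)
    + px (fun t x => gcoef f1 h1 f0 h0 (u t x) (px u t x) * mom u t x)
         (fst p) (snd p) = 0.

Definition defined_on (U : R * R -> Prop) (u : R -> R -> R) : Prop :=
  forall p : R * R, U p ->
    px u (fst p) (snd p) <> 0 /\
    (u (fst p) (snd p)) ^ 2 - (px u (fst p) (snd p)) ^ 2 <> 0.

Definition flux_along (Phi : R -> R -> R -> R -> R -> R -> R)
    (u : R -> R -> R) : R -> R -> R :=
  fun t x => Phi x (u t x) (px u t x) (mom u t x) (pt u t x) (px (pt u) t x).

Definition conserved_on (U : R * R -> Prop) (u : R -> R -> R)
    (rho : R -> R -> R) (Phi : R -> R -> R -> R -> R -> R -> R) : Prop :=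
  forall p : R * R, U p ->
    ex_derive (fun s => rho s (snd p)) (fst p) /\
    ex_derive (fun y => flux_along Phi u (fst p) y) (snd p) /\
    pt rho (fst p) (snd p) + px (flux_along Phi u) (fst p) (snd p) = 0.

(* Write m = u - u_xx and w = u^2 - u_x^2, so that w_x = 2 u_x m.  Both terms of
   f m are then exact x-derivatives: u_x f1(w) m = (F1(w)/2)_x for an antiderivative
   F1 of f1, and u m / w = (x + L)_x with L = ln((u - u_x)^2 / (u + u_x)^2) / 4.
   Since m_t = u_t - u_txx, the equation reads u_t = (u_tx - g m - f0 (x + L) - F1(w)/2)_x.
   For the H^1 density, D_t(u_x^2 + u^2) = (2 u u_tx)_x + 2 u m_t, and the identity
   u_x g = u f + u_x h1(w) + h0 u / w turns 2 u m_t = -2 u f m - 2 u (g m)_x into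
   (H1(w) + 2 h0 (x + L) - 2 u g m)_x in the same way. *)

From Stdlib Require Import Reals Lra List.
From Coquelicot Require Import Coquelicot.
Open Scope R_scope.
Import ListNotations.

Lemma px_of_is_derive (v : R -> R -> R) t x l : is_derive (v t) x l -> px v t x = l.
Proof. apply is_derive_unique. Qed.

Lemma pt_of_is_derive (v : R -> R -> R) t x l :
  is_derive (fun s => v s x) t l -> pt v t x = l.
Proof. apply is_derive_unique. Qed.

Lemma pder_px (w : list bool) (u : R -> R -> R) :
  pder w (px u) = pder (w ++ [false]) u.
Proof. induction w as [|[|] w IH]; simpl; rewrite ?IH; reflexivity. Qed.

Lemma smooth_on_px U u : smooth_on U u -> smooth_on U (px u).
Proof. intros Hs w p Hp. rewrite pder_px. apply Hs, Hp. Qed.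

Lemma locally_2d_of_open (U : R * R -> Prop) t x :
  open U -> U (t, x) -> locally_2d (fun a b => U (a, b)) t x.
Proof.
  intros HU Hp. apply locally_2d_locally.
  apply (filter_imp U); [intros [a b]; auto | apply HU, Hp].
Qed.

Section Smooth.

Variables (U : R * R -> Prop) (u : R -> R -> R).
Hypotheses (HU : open U) (Hs : smooth_on U u).

Lemma smooth_on_is_derive_x w t x :
  U (t, x) -> is_derive (fun y => pder w u t y) x (pder (false :: w) u t x).
Proof. intros Hp. apply Derive_correct, (Hs w (t, x) Hp). Qed.

Lemma smooth_on_ex_derive_x w t x : U (t, x) -> ex_derive (fun y => pder w u t y) x.
Proof. intros Hp. eexists. apply smooth_on_is_derive_x, Hp. Qed.

Lemma smooth_on_is_derive_t w t x :
  U (t, x) -> is_derive (fun s => pder w u s x) t (pder (true :: w) u t x).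
Proof. intros Hp. apply Derive_correct, (Hs w (t, x) Hp). Qed.

Lemma pt_px_comm t x : U (t, x) -> pt (px u) t x = px (pt u) t x.
Proof.
  intros Hp. apply Schwarz.
  - apply (locally_2d_impl (fun a b => U (a, b))); [|apply locally_2d_of_open; auto].
    apply locally_2d_forall. intros s y Hsy.
    destruct (Hs [] (s, y) Hsy) as [Dt [Dx _]].
    repeat split; [exact Dt | exact Dx | |].
    + exact (proj1 (Hs [false] (s, y) Hsy)).
    + exact (proj1 (proj2 (Hs [true] (s, y) Hsy))).
  - apply continuity_2d_pt_filterlim, (Hs [true; false] (t, x) Hp).
  - apply continuity_2d_pt_filterlim, (Hs [false; true] (t, x) Hp).
Qed.

End Smooth.

Lemma pt_px_px_comm U u t x : open U -> smooth_on U u -> U (t, x) ->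
  pt (px (px u)) t x = px (px (pt u)) t x.
Proof.
  intros HU Hs Hp.
  rewrite (pt_px_comm U (px u) HU (smooth_on_px U u Hs) t x Hp).
  apply Derive_ext_loc.
  apply (filter_imp (fun y => U (t, y))); [intros y; apply pt_px_comm; auto |].
  apply (locally_2d_1d_const_x (fun a b => U (a, b))), locally_2d_of_open; auto.
Qed.

Lemma is_derive_sum_sq (F G : R -> R) s dF dG :
  is_derive F s dF -> is_derive G s dG ->
  is_derive (fun s => F s ^ 2 + G s ^ 2) s (2 * F s * dF + 2 * G s * dG).
Proof.
  intros HF HG.
  replace (2 * F s * dF + 2 * G s * dG)
    with (INR 2 * dF * F s ^ Nat.pred 2 + INR 2 * dG * G s ^ Nat.pred 2)
    by (simpl; ring).
  apply (is_derive_plus (K := R_AbsRing) (V := R_NormedModule)); apply is_derive_pow; assumption.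
Qed.

Lemma ex_derive_gcoef_mul (f1 h1 : R -> R) (f0 h0 : R) (a b m : R -> R) y :
  (forall z, ex_derive f1 z) -> (forall z, ex_derive h1 z) ->
  ex_derive a y -> ex_derive b y -> ex_derive m y ->
  b y <> 0 -> a y ^ 2 - b y ^ 2 <> 0 ->
  ex_derive (fun y => gcoef f1 h1 f0 h0 (a y) (b y) * m y) y.
Proof. intros. unfold gcoef. auto_derive. repeat split; auto. Qed.

Lemma is_derive_RInt_0 (f : R -> R) :
  (forall z, continuous f z) -> forall z, is_derive (fun z => RInt f 0 z) z (f z).
Proof.
  intros Hc z. apply (is_derive_RInt _ _ 0); [|apply Hc].
  apply filter_forall. intros b. apply RInt_correct, ex_RInt_continuous.
  intros; apply Hc.
Qed.

(* Logarithms of squares keep this defined whatever the signs of a - b and a + b. *)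
Definition log_potential (a b : R) : R :=
  / 4 * (ln ((a - b) ^ 2) - ln ((a + b) ^ 2)).

Definition momentum_flux (F1 f1 h1 : R -> R) (f0 h0 : R)
    : R -> R -> R -> R -> R -> R -> R :=
  fun x a b m _ utx =>
    - utx + gcoef f1 h1 f0 h0 a b * m + f0 * (x + log_potential a b)
    + / 2 * F1 (a ^ 2 - b ^ 2).

Definition energy_flux (H1 f1 h1 : R -> R) (f0 h0 : R)
    : R -> R -> R -> R -> R -> R -> R :=
  fun x a b m _ utx =>
    2 * a * (gcoef f1 h1 f0 h0 a b * m - utx) - H1 (a ^ 2 - b ^ 2)
    - 2 * h0 * (x + log_potential a b).

Lemma gcoef_fcoef (f1 h1 : R -> R) (f0 h0 a b : R) :
  b <> 0 -> a ^ 2 - b ^ 2 <> 0 ->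
  b * gcoef f1 h1 f0 h0 a b
  = a * fcoef f1 f0 a b + b * h1 (a ^ 2 - b ^ 2) + h0 * (a / (a ^ 2 - b ^ 2)).
Proof. intros Hb Hw. unfold gcoef, fcoef. field. auto. Qed.

Section AlongCurve.

(* At fixed t, a, b, c, P, E stand for u, u_x, u_xx, u_t, u_tx as functions of x,
   so that a - c is m. *)
Variables (a b c : R -> R) (y : R).
Hypotheses (Ha : is_derive a y (b y)) (Hb : is_derive b y (c y))
  (Hw : a y ^ 2 - b y ^ 2 <> 0).

Lemma is_derive_log_potential :
  is_derive (fun y => y + log_potential (a y) (b y)) y
    (a y * (a y - c y) / (a y ^ 2 - b y ^ 2)).
Proof.
  assert (Hm : a y - b y <> 0) by (intro H; apply Hw; replace (a y) with (b y) by lra; ring).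
  assert (Hp : a y + b y <> 0) by (intro H; apply Hw; replace (a y) with (- b y) by lra; ring).
  unfold log_potential. auto_derive.
  - repeat split; try (eexists; eassumption); nra.
  - replace (Derive (fun x => a x) y) with (b y) by (symmetry; now apply is_derive_unique).
    replace (Derive (fun x => b x) y) with (c y) by (symmetry; now apply is_derive_unique).
    field; auto.
Qed.

Lemma is_derive_comp_diff_sq (F f : R -> R) :
  (forall z, is_derive F z (f z)) ->
  is_derive (fun y => F (a y ^ 2 - b y ^ 2)) y
    (2 * b y * (a y - c y) * f (a y ^ 2 - b y ^ 2)).
Proof.
  intros HF.
  apply (is_derive_comp (K := R_AbsRing) (V := R_NormedModule)); [apply HF|].
  auto_derive.
  - repeat split; eexists; eassumption.
  - replace (Derive (fun x => a x) y) with (b y) by (symmetry; now apply is_derive_unique).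
    replace (Derive (fun x => b x) y) with (c y) by (symmetry; now apply is_derive_unique).
    ring.
Qed.

Variables (f1 h1 : R -> R) (f0 h0 : R) (P E : R -> R) (e k : R).
Hypotheses (HE : is_derive E y e)
  (HK : is_derive (fun y => gcoef f1 h1 f0 h0 (a y) (b y) * (a y - c y)) y k).

Lemma is_derive_momentum_flux (F1 : R -> R) :
  (forall z, is_derive F1 z (f1 z)) ->
  is_derive (fun y => momentum_flux F1 f1 h1 f0 h0 y (a y) (b y) (a y - c y) (P y) (E y)) y
    (k - e + fcoef f1 f0 (a y) (b y) * (a y - c y)).
Proof.
  intros HF1.
  pose proof is_derive_log_potential as DL.
  pose proof (is_derive_comp_diff_sq F1 f1 HF1) as DF.
  replace (k - e + fcoef f1 f0 (a y) (b y) * (a y - c y))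
    with (- e + k + f0 * (a y * (a y - c y) / (a y ^ 2 - b y ^ 2))
          + / 2 * (2 * b y * (a y - c y) * f1 (a y ^ 2 - b y ^ 2)))
    by (unfold fcoef; field; exact Hw).
  unfold momentum_flux.
  apply (is_derive_plus (K := R_AbsRing) (V := R_NormedModule));
    [apply (is_derive_plus (K := R_AbsRing) (V := R_NormedModule)) |].
  - apply (is_derive_plus (K := R_AbsRing) (V := R_NormedModule)); [|exact HK].
    apply (is_derive_opp (K := R_AbsRing) (V := R_NormedModule)), HE.
  - apply is_derive_scal, DL.
  - apply is_derive_scal, DF.
Qed.

Lemma is_derive_energy_flux (H1 : R -> R) :
  (forall z, is_derive H1 z (h1 z)) -> b y <> 0 ->
  is_derive (fun y => energy_flux H1 f1 h1 f0 h0 y (a y) (b y) (a y - c y) (P y) (E y)) y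
    (2 * a y * (k - e + fcoef f1 f0 (a y) (b y) * (a y - c y)) - 2 * b y * E y).
Proof.
  intros HH1 Hb0.
  pose proof is_derive_log_potential as DL.
  pose proof (is_derive_comp_diff_sq H1 h1 HH1) as DH.
  pose proof (gcoef_fcoef f1 h1 f0 h0 (a y) (b y) Hb0 Hw) as Hgf.
  replace (2 * a y * (k - e + fcoef f1 f0 (a y) (b y) * (a y - c y)) - 2 * b y * E y)
    with (2 * b y * (gcoef f1 h1 f0 h0 (a y) (b y) * (a y - c y) - E y) + 2 * a y * (k - e)
          - 2 * b y * (a y - c y) * h1 (a y ^ 2 - b y ^ 2)
          - 2 * h0 * (a y * (a y - c y) / (a y ^ 2 - b y ^ 2))).
  2: { replace (2 * b y * (gcoef f1 h1 f0 h0 (a y) (b y) * (a y - c y) - E y))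
         with (2 * (a y - c y) * (b y * gcoef f1 h1 f0 h0 (a y) (b y)) - 2 * b y * E y)
         by ring.
       rewrite Hgf. unfold Rdiv. ring. }
  unfold energy_flux.
  apply (is_derive_minus (K := R_AbsRing) (V := R_NormedModule));
    [apply (is_derive_minus (K := R_AbsRing) (V := R_NormedModule)) |].
  - apply (is_derive_mult (K := R_AbsRing) (fun y => 2 * a y)
      (fun y => gcoef f1 h1 f0 h0 (a y) (b y) * (a y - c y) - E y)); [| | exact Rmult_comm].
    + apply is_derive_scal, Ha.
    + apply (is_derive_minus (K := R_AbsRing) (V := R_NormedModule)); assumption.
  - exact DH.
  - apply is_derive_scal, DL.
Qed.

End AlongCurve.

Section Solution.

Variables (f1 h1 : R -> R) (f0 h0 : R) (U : R * R -> Prop) (u : R -> R -> R).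
Hypotheses (Hf1 : forall z, ex_derive f1 z) (Hh1 : forall z, ex_derive h1 z)
  (HU : open U) (Hs : smooth_on U u) (Hd : defined_on U u)
  (Hsol : solves_on f1 h1 f0 h0 U u).

Let gm := fun t x => gcoef f1 h1 f0 h0 (u t x) (px u t x) * mom u t x.

Lemma solution_is_derive_gm t x : U (t, x) -> is_derive (gm t) x (px gm t x).
Proof.
  intros Hp. destruct (Hd (t, x) Hp) as [Hb Hw].
  apply Derive_correct, ex_derive_gcoef_mul; auto.
  - apply (smooth_on_ex_derive_x U u Hs [] t x Hp).
  - apply (smooth_on_ex_derive_x U u Hs [false] t x Hp).
  - apply (ex_derive_minus (V := R_NormedModule)).
    + apply (smooth_on_ex_derive_x U u Hs [] t x Hp).
    + apply (smooth_on_ex_derive_x U u Hs [false; false] t x Hp).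
Qed.

Lemma solution_residual t x : U (t, x) ->
  pt u t x + (px gm t x - px (px (pt u)) t x
              + fcoef f1 f0 (u t x) (px u t x) * (u t x - px (px u) t x)) = 0.
Proof.
  intros Hp. pose proof (Hsol (t, x) Hp) as Heq. cbn [fst snd] in Heq.
  assert (Hmt : pt (mom u) t x = pt u t x - pt (px (px u)) t x).
  { apply Derive_minus; [apply (Hs [] (t, x) Hp) | apply (Hs [false; false] (t, x) Hp)]. }
  rewrite Hmt, (pt_px_px_comm U u t x HU Hs Hp) in Heq.
  change (mom u t x) with (u t x - px (px u) t x) in Heq.
  fold gm in Heq. lra.
Qed.

Lemma momentum_conserved (F1 : R -> R) :
  (forall z, is_derive F1 z (f1 z)) ->
  conserved_on U u u (momentum_flux F1 f1 h1 f0 h0).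
Proof.
  intros HF1 [t x] Hp. cbn [fst snd].
  destruct (Hd (t, x) Hp) as [_ Hw].
  pose proof (is_derive_momentum_flux (u t) (px u t) (px (px u) t) x
    (smooth_on_is_derive_x U u Hs [] t x Hp)
    (smooth_on_is_derive_x U u Hs [false] t x Hp) Hw
    f1 h1 f0 h0 (pt u t) (px (pt u) t) _ _
    (smooth_on_is_derive_x U u Hs [false; true] t x Hp)
    (solution_is_derive_gm t x Hp) F1 HF1) as D.
  split; [apply (Hs [] (t, x) Hp) |].
  split; [eexists; exact D |].
  rewrite (px_of_is_derive (flux_along (momentum_flux F1 f1 h1 f0 h0) u) t x _ D).
  apply solution_residual, Hp.
Qed.

Lemma energy_conserved (H1 : R -> R) :
  (forall z, is_derive H1 z (h1 z)) ->
  conserved_on U u (fun t x => px u t x ^ 2 + u t x ^ 2) (energy_flux H1 f1 h1 f0 h0).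
Proof.
  intros HH1 [t x] Hp. cbn [fst snd].
  destruct (Hd (t, x) Hp) as [Hb Hw].
  pose proof (is_derive_energy_flux (u t) (px u t) (px (px u) t) x
    (smooth_on_is_derive_x U u Hs [] t x Hp)
    (smooth_on_is_derive_x U u Hs [false] t x Hp) Hw
    f1 h1 f0 h0 (pt u t) (px (pt u) t) _ _
    (smooth_on_is_derive_x U u Hs [false; true] t x Hp)
    (solution_is_derive_gm t x Hp) H1 HH1 Hb) as D.
  pose proof (is_derive_sum_sq (fun s => px u s x) (fun s => u s x) t _ _
    (smooth_on_is_derive_t U u Hs [false] t x Hp)
    (smooth_on_is_derive_t U u Hs [] t x Hp)) as Dt.
  split; [eexists; exact Dt |].
  split; [eexists; exact D |].
  rewrite (pt_of_is_derive (fun t x => px u t x ^ 2 + u t x ^ 2) t x _ Dt).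
  rewrite (px_of_is_derive (flux_along (energy_flux H1 f1 h1 f0 h0) u) t x _ D).
  change (pder [true] u t x) with (pt u t x).
  change (pder [true; false] u t x) with (pt (px u) t x).
  change (pder [false; false; true] u t x) with (px (px (pt u)) t x).
  rewrite (pt_px_comm U u HU Hs t x Hp).
  pose proof (solution_residual t x Hp) as Hres.
  replace (pt u t x) with (- (px gm t x - px (px (pt u)) t x
             + fcoef f1 f0 (u t x) (px u t x) * (u t x - px (px u) t x))) by lra.
  ring.
Qed.

End Solution.

Theorem corollary1 :
  forall (f1 h1 : R -> R) (f0 h0 : R),
    smooth1 f1 -> smooth1 h1 ->
    exists Phi1 Phi2 : R -> R -> R -> R -> R -> R -> R,
      forall (U : R * R -> Prop) (u : R -> R -> R),
        open U -> smooth_on U u -> defined_on U u ->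
        solves_on f1 h1 f0 h0 U u ->
        conserved_on U u u Phi1 /\
        conserved_on U u (fun t x => (px u t x) ^ 2 + (u t x) ^ 2) Phi2.
Proof.
  intros f1 h1 f0 h0 Hf1 Hh1.
  assert (Df1 : forall z, ex_derive f1 z) by exact (Hf1 0%nat).
  assert (Dh1 : forall z, ex_derive h1 z) by exact (Hh1 0%nat).
  exists (momentum_flux (fun z => RInt f1 0 z) f1 h1 f0 h0),
         (energy_flux (fun z => RInt h1 0 z) f1 h1 f0 h0).
  intros U u HU Hs Hd Hsol. split.
  - apply momentum_conserved; auto.
    apply is_derive_RInt_0. intros z. apply (ex_derive_continuous (K := R_AbsRing) (V := R_NormedModule)), Df1.
  - apply energy_conserved; auto.
    apply is_derive_RInt_0. intros z. apply (ex_derive_continuous (K := R_AbsRing) (V := R_NormedModule)), Dh1.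
Qed.
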